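(* For every directed graph $G=(V,E)$ and every state $\mathcal{S}$ with no red nodes, the set function $A\mapsto\mathcal{F}_{\mathcal{S}}(A)$ on subsets $A\subseteq V\setminus\mathcal{S}^b$ is monotonically increasing (i.e. $\mathcal{F}_{\mathcal{S}}(A)\le\mathcal{F}_{\mathcal{S}}(A\cup\{v\})$) and submodular (i.e. for all $A\subseteq A'\subseteq V\setminus\mathcal{S}^b$ and $v\in V\setminus\mathcal{S}^b$, $\mathcal{F}_{\mathcal{S}}(A'\cup\{v\})-\mathcal{F}_{\mathcal{S}}(A')\le\mathcal{F}_{\mathcal{S}}(A\cup\{v\})-\mathcal{F}_{\mathcal{S}}(A)$).
   Context: A state is a map $\mathcal{S}:V\to\{b,r,u\}$ (blue, red, uncolored); colored means blue or red; $\mathcal{S}^b$ is the set of blue nodes. The \textsc{Random Pick} process from an initial state $\mathcal{S}_0$: in each round $t=1,2,\dots$, every node $v$ with at least one out-neighbor picks an out-neighbor $ps_t(v)$ uniformly at random, independently of all other picks; $\mathcal{S}_t(v)=\mathcal{S}_{t-1}(ps_t(v))$ if $\mathcal{S}_{t-1}(v)=u$ and $\mathcal{S}_{t-1}(ps_t(v))\ne u$, else $\mathcal{S}_t(v)=\mathcal{S}_{t-1}(v)$. It almost surely reaches a stable state (no uncolored node has a colored out-neighbor). For a state $\mathcal{S}$ with no red nodes and $A\subseteq V\setminus\mathcal{S}^b$, $\mathcal{F}_{\mathcal{S}}(A)$ is the expected number of red nodes in the final stable state of the process started from $\mathcal{S}$ with all nodes of $A$ recolored red. *)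

From HB Require Import structures.
From mathcomp Require Import all_boot all_order all_algebra.
From mathcomp Require Import all_classical all_reals all_analysis.
Set Implicit Arguments. Unset Strict Implicit. Unset Printing Implicit Defensive.
Import Order.TTheory GRing.Theory Num.Theory numFieldNormedType.Exports.
Local Open Scope ring_scope.

Definition color := option bool.
Definition blue : color := Some true.
Definition red : color := Some false.
Definition uncol : color := None.

Section RandomPick.
Variables (R : realType) (V : finType) (E : rel V).
(* A directed graph on the finite vertex set V: E v w means an arc v -> w. *)

Definition state := {ffun V -> color}.

Definition outdeg (v : V) : nat := #|[set w | E v w]|.

(* Probability that the (independent, uniform) picks of one round equal p.
   Nodes without out-neighbours do not pick; we encode this by a dummy
   deterministic pick p v = v, which (see [step]) has no effect. *)
Definition pick_prob (p : {ffun V -> V}) : R :=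
  \prod_(v : V)
    (if (0 < outdeg v)%N
     then (if E v (p v) then (outdeg v)%:R^-1 else 0)
     else (if p v == v then 1 else 0)).

Definition step (S : state) (p : {ffun V -> V}) : state :=
  [ffun v => if (S v == uncol) && (0 < outdeg v)%N && (S (p v) != uncol)
             then S (p v) else S v].

Definition trans (S S' : state) : R :=
  \sum_(p : {ffun V -> V}) pick_prob p * (step S p == S')%:R.

Fixpoint dist (S0 : state) (t : nat) (S : state) : R :=
  match t with
  | 0 => (S == S0)%:R
  | t'.+1 => \sum_(S1 : state) dist S0 t' S1 * trans S1 S
  end.

Definition stable (S : state) : bool :=
  [forall v, [forall w, (S v == uncol) && E v w ==> (S w == uncol)]].

Definition blues (S : state) : {set V} := [set v | S v == blue].
Definition reds (S : state) : {set V} := [set v | S v == red].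

(* Probability that the final stable state is X (for X stable, the event
   {S_t = X} is increasing in t and its union is {final state = X}). *)
Definition final_prob (S0 X : state) : R := limn (fun t => dist S0 t X).

Definition expected_final_reds (S0 : state) : R :=
  \sum_(X : state | stable X) #|reds X|%:R * final_prob S0 X.

Definition recolor_red (S : state) (A : {set V}) : state :=
  [ffun v => if v \in A then red else S v].

Definition F (S : state) (A : {set V}) : R :=
  expected_final_reds (recolor_red S A).

End RandomPick.

From HB Require Import structures.
From mathcomp Require Import all_boot all_order all_algebra.
From mathcomp Require Import all_classical all_reals all_analysis.
From mathcomp Require Import lra.
Import Order.TTheory GRing.Theory Num.Theory numFieldNormedType.Exports.
Local Open Scope ring_scope.
Local Open Scope classical_set_scope.
Set Implicit Arguments. Unset Strict Implicit. Unset Printing Implicit Defensive.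

(* Run the processes started from the recolored states with the same picks.  A
   node's new color depends only on its old color and on that of the node it
   picks, so a node-wise relation between the colorings persists; the relations
   used here give, at every time [t], the monotonicity and submodularity
   inequalities for the expected number of red nodes.  These expectations tend
   to [F] because absorption is geometric: from any state the process becomes
   stable within [|V|] rounds with probability at least [|V|^-|V|]. *)

Lemma sumr_eq_mul (R : pzSemiRingType) (T : finType) (x : T) (f : T -> R) :
  \sum_y (y == x)%:R * f y = f x.
Proof.
rewrite (bigD1 x) //= eqxx mul1r big1 ?addr0 // => y /negbTE ->.
by rewrite mul0r.
Qed.

Lemma nonincreasing_geometric_cvg0 (R : realType) (u : R^nat) (N : nat) (c : R) :
  nonincreasing_seq u -> (forall n, 0 <= u n) -> `|c| < 1 ->
  (forall k, u (k * N)%N <= c ^+ k) -> u @ \oo --> 0.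
Proof.
move=> u_noninc u_ge0 c_lt1 u_geom.
have u_cvg : cvgn u.
  by apply: cvgP (nonincreasing_cvgn u_noninc _); exists 0 => _ [n _ <-].
suff <- : limn u = 0 by [].
apply/eqP; rewrite eq_le; apply/andP; split; last first.
  by apply: limr_ge u_cvg _; exact: nearW.
apply: (cvgr_to_ge (cvg_geometric 1 c_lt1)); apply: nearW => k.
rewrite /geometric /= mul1r.
exact: le_trans (nonincreasing_cvgn_ge u_noninc u_cvg _) (u_geom k).
Qed.

Definition step_color (a : color) (b : bool) (c : color) : color :=
  if (a == uncol) && b && (c != uncol) then c else a.

Definition redder (a b : color) : bool := (b == red) || (b == a).

Definition monotone_inv (a1 a2 a3 a4 : color) : bool :=
  [&& redder a1 a2, a3 == a1 & a4 == a1].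

(* Colors of a node in the processes started from [A], [v |: A], [A'] and
   [v |: A'] (for [A \subset A']): red in the last forces red in the second or third. *)
Definition submodular_inv (a1 a2 a3 a4 : color) : bool :=
  [&& redder a1 a2, redder a1 a3, redder a2 a4, redder a3 a4 &
      (a4 == red) ==> (a2 == red) || (a3 == red)].

Lemma monotone_inv_step a1 a2 a3 a4 c1 c2 c3 c4 b :
  monotone_inv a1 a2 a3 a4 -> monotone_inv c1 c2 c3 c4 ->
  monotone_inv (step_color a1 b c1) (step_color a2 b c2)
               (step_color a3 b c3) (step_color a4 b c4).
Proof.
case/and3P => a12 /eqP-> /eqP->; case/and3P => c12 /eqP-> /eqP->.
rewrite /monotone_inv !eqxx !andbT.
by move: a12 c12; case: a1 => [[]|]; case: a2 => [[]|];
   case: c1 => [[]|]; case: c2 => [[]|]; case: b.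
Qed.

Lemma monotone_inv_reds a1 a2 a3 a4 : monotone_inv a1 a2 a3 a4 ->
  ((a4 == red) + (a1 == red) <= (a2 == red) + (a3 == red))%N.
Proof.
case/and3P => a12 /eqP-> /eqP->.
by move: a12; case: a1 => [[]|]; case: a2 => [[]|].
Qed.

Lemma submodular_inv_step a1 a2 a3 a4 c1 c2 c3 c4 b :
  submodular_inv a1 a2 a3 a4 -> submodular_inv c1 c2 c3 c4 ->
  submodular_inv (step_color a1 b c1) (step_color a2 b c2)
                 (step_color a3 b c3) (step_color a4 b c4).
Proof.
case: a1 => [[]|]; case: a2 => [[]|]; case: a3 => [[]|]; case: a4 => [[]|] => //= _;
case: c1 => [[]|]; case: c2 => [[]|]; case: c3 => [[]|]; case: c4 => [[]|] => //= _;
by case: b.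
Qed.

Lemma submodular_inv_reds a1 a2 a3 a4 : submodular_inv a1 a2 a3 a4 ->
  ((a4 == red) + (a1 == red) <= (a2 == red) + (a3 == red))%N.
Proof.
by case: a1 => [[]|]; case: a2 => [[]|]; case: a3 => [[]|]; case: a4 => [[]|].
Qed.

Section RandomPickProcess.
Variables (R : realType) (V : finType) (E : rel V).

Definition pick_weight (v w : V) : R :=
  if (0 < outdeg E v)%N then (if E v w then (outdeg E v)%:R^-1 else 0)
  else (if w == v then 1 else 0).

Lemma pick_probE p : pick_prob R E p = \prod_v pick_weight v (p v).
Proof. by []. Qed.

Lemma pick_weight_ge0 v w : 0 <= pick_weight v w.
Proof. by rewrite /pick_weight; case: ifP => _; case: ifP => _ //; rewrite invr_ge0. Qed.

Lemma pick_prob_ge0 p : 0 <= pick_prob R E p.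
Proof. by rewrite pick_probE; apply: prodr_ge0 => v _; exact: pick_weight_ge0. Qed.

Lemma sum_pick_weight v : \sum_w pick_weight v w = 1.
Proof.
rewrite /pick_weight; case: posnP => [_|d_gt0].
  by rewrite -big_mkcond big_pred1_eq.
rewrite -big_mkcond sumr_const.
have -> : #|[pred w | E v w]| = outdeg E v by rewrite /outdeg cardsE.
by rewrite -[LHS]mulr_natr mulVf // pnatr_eq0 -lt0n d_gt0.
Qed.

Lemma sum_pick_prob : \sum_p pick_prob R E p = 1.
Proof.
under eq_bigr do rewrite pick_probE.
rewrite -(bigA_distr_bigA (fun v w => pick_weight v w)) /=.
by rewrite big1 // => v _; exact: sum_pick_weight.
Qed.

Lemma sum_pick_prob_at v w :
  \sum_p pick_prob R E p * (p v == w)%:R = pick_weight v w.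
Proof.
have pickE p : pick_prob R E p * (p v == w)%:R =
    \prod_u (pick_weight u (p u) * (if u == v then (p u == w)%:R else 1)).
  rewrite big_split /= -pick_probE; congr (_ * _).
  by rewrite (bigD1 v) //= eqxx big1 ?mulr1 // => u /negbTE ->.
under eq_bigr do rewrite pickE.
rewrite -(bigA_distr_bigA
  (fun u j => pick_weight u j * (if u == v then (j == w)%:R else 1))) /=.
rewrite (bigD1 v) //= [X in _ * X]big1 ?mulr1.
  by rewrite eqxx; under eq_bigr do rewrite mulrC; exact: sumr_eq_mul.
by move=> u /negbTE ->; under eq_bigr do rewrite mulr1; exact: sum_pick_weight.
Qed.

Lemma pick_prob_neq0_edge p v :
  pick_prob R E p != 0 -> (0 < outdeg E v)%N -> E v (p v).
Proof.
move=> + d_gt0; rewrite pick_probE (bigD1 v) //= /pick_weight d_gt0.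
by case: (E v (p v)) => //; rewrite mul0r eqxx.
Qed.

Lemma pick_weight_ge_inv_card v w : E v w -> #|V|%:R^-1 <= pick_weight v w.
Proof.
move=> vw; have d_gt0 : (0 < outdeg E v)%N by apply/card_gt0P; exists w; rewrite inE.
rewrite /pick_weight d_gt0 vw lef_pV2 ?posrE ?ltr0n ?ler_nat ?max_card //.
exact: leq_trans d_gt0 (max_card _).
Qed.

Lemma dist_ge0 S t X : 0 <= dist R E S t X.
Proof.
elim: t X => [|t IH] X /=; first exact: ler0n.
apply: sumr_ge0 => Y _; apply: mulr_ge0 => //; apply: sumr_ge0 => p _.
by apply: mulr_ge0; [exact: pick_prob_ge0 | exact: ler0n].
Qed.

Lemma sum_trans S : \sum_Y trans R E S Y = 1.
Proof.
rewrite /trans exchange_big /= -[RHS]sum_pick_prob; apply: eq_bigr => p _.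
rewrite -mulr_sumr (bigD1 (step E S p)) //= eqxx big1 ?addr0 ?mulr1 //.
by move=> Y /negbTE; rewrite eq_sym => ->.
Qed.

Lemma sum_dist S t : \sum_X dist R E S t X = 1.
Proof.
elim: t => [|t IH] /=.
  by rewrite (bigD1 S) //= eqxx big1 ?addr0 // => X /negbTE ->.
rewrite exchange_big /= -[RHS]IH; apply: eq_bigr => Y _.
by rewrite -mulr_sumr sum_trans mulr1.
Qed.

Lemma dist_le1 S t X : dist R E S t X <= 1.
Proof.
rewrite -(sum_dist S t) (bigD1 X) //= lerDl.
by apply: sumr_ge0 => Y _; exact: dist_ge0.
Qed.

Lemma distD S t m Y :
  dist R E S (t + m) Y = \sum_X dist R E S t X * dist R E X m Y.
Proof.
elim: m Y => [|m IH] Y.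
  by rewrite addn0 /=; under eq_bigr do rewrite mulrC eq_sym; rewrite sumr_eq_mul.
rewrite addnS [LHS]/=; under eq_bigr do rewrite IH mulr_suml.
rewrite exchange_big /=; apply: eq_bigr => X _.
by rewrite mulr_sumr; apply: eq_bigr => Z _; rewrite mulrA.
Qed.

Lemma dist_step S t X :
  dist R E S t.+1 X = \sum_p pick_prob R E p * dist R E (step E S p) t X.
Proof.
rewrite -add1n distD; under eq_bigr do rewrite /= sumr_eq_mul /trans mulr_suml.
rewrite exchange_big /=; apply: eq_bigr => p _.
rewrite -[RHS](sumr_eq_mul (step E S p) (fun Y => pick_prob R E p * dist R E Y t X)).
by apply: eq_bigr => Y _; rewrite eq_sym mulrCA mulrA.
Qed.

Lemma step_stable X p : stable E X -> pick_prob R E p != 0 -> step E X p = X.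
Proof.
move=> /forallP X_stable p_neq0; apply/ffunP => v; rewrite ffunE.
case: ifP => // /andP[/andP[Xv d_gt0] Xpv].
move: (X_stable v) => /forallP/(_ (p v)).
by rewrite Xv (pick_prob_neq0_edge p_neq0 d_gt0) (negbTE Xpv).
Qed.

Lemma dist_stable X t Y : stable E X -> dist R E X t Y = (Y == X)%:R.
Proof.
move=> X_stable; elim: t => [|t IH] //.
rewrite dist_step -[RHS]mul1r -[X in X * _]sum_pick_prob mulr_suml.
apply: eq_bigr => p _.
have [->|p_neq0] := eqVneq (pick_prob R E p) 0; first by rewrite !mul0r.
by rewrite step_stable // IH.
Qed.

Lemma dist_stable_nondecreasing S X : stable E X ->
  nondecreasing_seq (fun t => dist R E S t X).
Proof.
move=> X_stable; apply/nondecreasing_seqP => t.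
rewrite -addn1 distD (bigD1 X) // (dist_stable _ _ X_stable) eqxx mulr1 lerDl.
by apply: sumr_ge0 => Y _; apply: mulr_ge0; exact: dist_ge0.
Qed.

Lemma cvg_final_prob S X : stable E X ->
  dist R E S t X @[t --> \oo] --> final_prob R E S X.
Proof.
move=> X_stable; apply/cvg_ex; exists (sup (range (fun t => dist R E S t X))).
apply: nondecreasing_cvgn (dist_stable_nondecreasing S X_stable) _.
by exists 1 => _ [t _ <-]; exact: dist_le1.
Qed.

Definition expect (g : state V -> R) t S := \sum_X dist R E S t X * g X.

Lemma expect_ge0 g t S : (forall X, 0 <= g X) -> 0 <= expect g t S.
Proof.
by move=> g_ge0; apply: sumr_ge0 => X _; apply: mulr_ge0 => //; exact: dist_ge0.
Qed.

Lemma expect0 g S : expect g 0 S = g S.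
Proof. exact: sumr_eq_mul. Qed.

Lemma expect_step g t S :
  expect g t.+1 S = \sum_p pick_prob R E p * expect g t (step E S p).
Proof.
rewrite /expect; under eq_bigr do rewrite dist_step mulr_suml.
rewrite exchange_big /=; apply: eq_bigr => p _.
by rewrite mulr_sumr; apply: eq_bigr => X _; rewrite mulrA.
Qed.

Lemma expectD g t m S :
  expect g (t + m) S = \sum_X dist R E S t X * expect g m X.
Proof.
rewrite /expect; under eq_bigr do rewrite distD mulr_suml.
rewrite exchange_big /=; apply: eq_bigr => X _.
by rewrite mulr_sumr; apply: eq_bigr => Y _; rewrite mulrA.
Qed.

Lemma expect_stable g t X : stable E X -> expect g t X = g X.
Proof.
move=> X_stable; rewrite /expect.
by under eq_bigr do rewrite dist_stable //; exact: sumr_eq_mul.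
Qed.

Lemma stepE S p v : step E S p v = step_color (S v) (0 < outdeg E v)%N (S (p v)).
Proof. by rewrite ffunE. Qed.

Definition num_reds (X : state V) : R := #|reds X|%:R.

Lemma num_redsE X : num_reds X = (\sum_v (X v == red))%:R.
Proof.
rewrite /num_reds /reds -sum1_card big_mkcond /=; congr _%:R.
by apply: eq_bigr => v _; rewrite inE; case: (X v == red).
Qed.

Lemma expect_num_reds_coupling (P : color -> color -> color -> color -> bool) :
  (forall a1 a2 a3 a4 c1 c2 c3 c4 b, P a1 a2 a3 a4 -> P c1 c2 c3 c4 ->
     P (step_color a1 b c1) (step_color a2 b c2) (step_color a3 b c3)
       (step_color a4 b c4)) ->
  (forall a1 a2 a3 a4, P a1 a2 a3 a4 ->
     ((a4 == red) + (a1 == red) <= (a2 == red) + (a3 == red))%N) ->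
  forall t (S1 S2 S3 S4 : state V), (forall v, P (S1 v) (S2 v) (S3 v) (S4 v)) ->
  expect num_reds t S4 + expect num_reds t S1 <=
  expect num_reds t S2 + expect num_reds t S3.
Proof.
move=> P_step P_reds; elim=> [|t IH] S1 S2 S3 S4 PS.
  rewrite !expect0 !num_redsE -!natrD ler_nat -!big_split /=.
  by apply: leq_sum => v _; exact: P_reds.
rewrite !expect_step -!big_split /=; apply: ler_sum => p _.
rewrite -!mulrDr; apply: ler_wpM2l; first exact: pick_prob_ge0.
by apply: IH => v; rewrite !stepE; exact: P_step.
Qed.

Definition num_uncol (X : state V) : nat := #|[pred v | X v == uncol]|.

Definition stable_prob t S : R := expect (fun X => (stable E X)%:R) t S.

Lemma stable_num_uncol0 X : num_uncol X = 0%N -> stable E X.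
Proof.
move=> /card0_eq X0; apply/forallP => v; apply/forallP => w.
by apply/implyP => /andP[Xv _]; move: (X0 v); rewrite !inE Xv.
Qed.

Lemma num_uncol_step_lt (X : state V) (p : {ffun V -> V}) v :
  X v == uncol -> (0 < outdeg E v)%N -> X (p v) != uncol ->
  (num_uncol (step E X p) < num_uncol X)%N.
Proof.
move=> Xv d_gt0 Xpv; apply/proper_card/properP; split.
  apply/fintype.subsetP => x; rewrite !inE stepE /step_color.
  by case: ifP => // /andP[/andP[-> _] _].
by exists v; rewrite !inE // stepE /step_color Xv d_gt0 Xpv.
Qed.

Let q : R := #|V|%:R^-1.

Lemma q_ge0 : 0 <= q.
Proof. by rewrite invr_ge0 ler0n. Qed.

Lemma q_le1 : q <= 1.
Proof.
rewrite /q; case: #|V| => [|n]; first by rewrite invr0 ler01.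
by rewrite invf_le1 ?ltr0Sn // ler1n.
Qed.

(* An unstable state has an uncolored [v] with a colored out-neighbour [w];
   with probability at least [q], [v] picks [w] and one fewer node is uncolored. *)
Lemma stable_prob_ge t X :
  (num_uncol X <= t)%N -> q ^+ num_uncol X <= stable_prob t X.
Proof.
elim: t X => [|t IH] X X_le.
  have X0 : num_uncol X = 0%N by apply/eqP; rewrite -leqn0.
  by rewrite /stable_prob expect0 stable_num_uncol0 // X0 expr0.
case X_stable: (stable E X).
  by rewrite /stable_prob expect_stable // X_stable exprn_ile1 ?q_ge0 ?q_le1.
move/negbT: X_stable; rewrite negb_forall => /existsP[v].
rewrite negb_forall => /existsP[w]; rewrite negb_imply => /andP[/andP[Xv vw] Xw].
have d_gt0 : (0 < outdeg E v)%N by apply/card_gt0P; exists w; rewrite inE.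
have n_gt0 : (0 < num_uncol X)%N by apply/card_gt0P; exists v; rewrite inE.
rewrite /stable_prob expect_step.
apply: le_trans (_ : \sum_p pick_prob R E p * (p v == w)%:R * q ^+ (num_uncol X).-1 <= _).
  rewrite -mulr_suml sum_pick_prob_at -{1}(prednK n_gt0) exprS.
  by apply: ler_wpM2r; [exact: exprn_ge0 q_ge0 | exact: pick_weight_ge_inv_card].
apply: ler_sum => p _; have [pvw|_] := eqVneq (p v) w; last first.
  rewrite mulr0 mul0r; apply: mulr_ge0; first exact: pick_prob_ge0.
  by apply: expect_ge0 => Y; exact: ler0n.
rewrite mulr1; apply: ler_wpM2l; first exact: pick_prob_ge0.
have lt_step : (num_uncol (step E X p) < num_uncol X)%N.
  by apply: num_uncol_step_lt Xv d_gt0 _; rewrite pvw.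
apply: le_trans (IH _ _); last by rewrite -ltnS (leq_trans lt_step).
by apply: ler_wiXn2l; [exact: q_ge0 | exact: q_le1 | rewrite -ltnS prednK].
Qed.

Lemma unstable_probE t S :
  1 - stable_prob t S = expect (fun X => (~~ stable E X)%:R) t S.
Proof.
rewrite /stable_prob /expect -{1}(sum_dist S t) -sumrB; apply: eq_bigr => X _.
by case: (stable E X); rewrite ?mulr1 ?mulr0 ?subrr ?subr0.
Qed.

Lemma unstable_probD t m S :
  1 - stable_prob (t + m) S = \sum_X dist R E S t X * (1 - stable_prob m X).
Proof.
rewrite /stable_prob expectD -{1}(sum_dist S t) -sumrB.
by apply: eq_bigr => X _; rewrite mulrBr mulr1.
Qed.

Lemma unstable_prob_contract m (c : R) :
  (forall X, 1 - stable_prob m X <= c * (~~ stable E X)%:R) ->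
  forall t S, 1 - stable_prob (t + m) S <= c * (1 - stable_prob t S).
Proof.
move=> contract t S; rewrite unstable_probD unstable_probE /expect mulr_sumr.
apply: ler_sum => X _; rewrite mulrCA; apply: ler_wpM2l; first exact: dist_ge0.
exact: contract.
Qed.

Lemma unstable_prob_nonincreasing S :
  nonincreasing_seq (fun t => 1 - stable_prob t S).
Proof.
apply/nonincreasing_seqP => t; rewrite -addn1 -[X in _ <= X]mul1r.
apply: unstable_prob_contract => X; rewrite mul1r.
case X_stable: (stable E X).
  by rewrite /stable_prob expect_stable // X_stable subrr.
by rewrite lerBlDr lerDl; apply: expect_ge0 => Y; exact: ler0n.
Qed.

Let rho : R := 1 - q ^+ #|V|.

Lemma rho_ge0 : 0 <= rho.
Proof. by rewrite subr_ge0 exprn_ile1 ?q_ge0 ?q_le1. Qed.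

Lemma norm_rho_lt1 : `|rho| < 1.
Proof.
rewrite ger0_norm ?rho_ge0 // ltrBlDr ltrDl.
rewrite /q; case: #|V| => [|n]; first by rewrite expr0 ltr01.
by rewrite exprn_gt0 // invr_gt0 ltr0Sn.
Qed.

Lemma unstable_prob_geometric k S : 1 - stable_prob (k * #|V|) S <= rho ^+ k.
Proof.
have decay t S' :
    1 - stable_prob (t + #|V|) S' <= rho * (1 - stable_prob t S').
  apply: unstable_prob_contract => X; case X_stable: (stable E X).
    by rewrite /stable_prob expect_stable // X_stable subrr mulr0.
  rewrite mulr1 lerD2l lerN2; apply: le_trans (stable_prob_ge (max_card _)).
  by apply: ler_wiXn2l; [exact: q_ge0 | exact: q_le1 | exact: max_card].
elim: k S => [|k IH] S.
  by rewrite mul0n expr0 lerBlDr lerDl /stable_prob expect0 ler0n.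
rewrite mulSnr exprS; apply: le_trans (decay _ _) _.
by apply: ler_wpM2l; [exact: rho_ge0 | exact: IH].
Qed.

Lemma cvg_unstable_prob S : 1 - stable_prob t S @[t --> \oo] --> 0.
Proof.
apply: (nonincreasing_geometric_cvg0 (unstable_prob_nonincreasing S) _ norm_rho_lt1).
  by move=> t; rewrite unstable_probE; apply: expect_ge0 => X; exact: ler0n.
by move=> k; exact: unstable_prob_geometric.
Qed.

(* Mass on stable states converges to [expected_final_reds]; the mass still on
   unstable states is at most [|V|] times the probability of not being absorbed. *)
Lemma cvg_expect_num_reds S :
  expect num_reds t S @[t --> \oo] --> expected_final_reds R E S.
Proof.
have splitE t : expect num_reds t S =
    \sum_(X | stable E X) num_reds X * dist R E S t X +
    \sum_(X | ~~ stable E X) dist R E S t X * num_reds X.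
  by rewrite /expect (bigID (stable E)) /=; under eq_bigr do rewrite mulrC.
rewrite -[expected_final_reds _ _ _]addr0; under eq_cvg do rewrite splitE.
apply: cvgD.
  apply: cvg_big => [|X X_stable]; first exact: add_continuous.
  by apply: cvgMl_tmp; exact: cvg_final_prob.
apply: (@squeeze_cvgr _ _ _ _ (fun=> 0) (fun t => #|V|%:R * (1 - stable_prob t S))).
- apply: nearW => t; apply/andP; split.
    by apply: sumr_ge0 => X _; apply: mulr_ge0; [exact: dist_ge0 | exact: ler0n].
  rewrite unstable_probE /expect mulr_sumr [leRHS](bigID (stable E)) /=.
  rewrite [X in _ <= X + _]big1 ?add0r => [|X ->]; last by rewrite mulr0 mulr0.
  apply: ler_sum => X /negbTE ->; rewrite mulr1 mulrC.
  by apply: ler_wpM2r; [exact: dist_ge0 | rewrite ler_nat max_card].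
- exact: cvg_cst.
- by rewrite -(mulr0 #|V|%:R); exact: cvgMl_tmp (cvg_unstable_prob S).
Qed.

Lemma expected_final_reds_coupling (P : color -> color -> color -> color -> bool) :
  (forall a1 a2 a3 a4 c1 c2 c3 c4 b, P a1 a2 a3 a4 -> P c1 c2 c3 c4 ->
     P (step_color a1 b c1) (step_color a2 b c2) (step_color a3 b c3)
       (step_color a4 b c4)) ->
  (forall a1 a2 a3 a4, P a1 a2 a3 a4 ->
     ((a4 == red) + (a1 == red) <= (a2 == red) + (a3 == red))%N) ->
  forall S1 S2 S3 S4 : state V, (forall v, P (S1 v) (S2 v) (S3 v) (S4 v)) ->
  expected_final_reds R E S4 + expected_final_reds R E S1 <=
  expected_final_reds R E S2 + expected_final_reds R E S3.
Proof.
move=> P_step P_reds S1 S2 S3 S4 PS.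
apply: (ler_cvg_to (a := \oo)).
- exact: cvgD (cvg_expect_num_reds (S := S4)) (cvg_expect_num_reds (S := S1)).
- exact: cvgD (cvg_expect_num_reds (S := S2)) (cvg_expect_num_reds (S := S3)).
by apply: nearW => t /=; exact: (expect_num_reds_coupling P_step P_reds t PS).
Qed.

End RandomPickProcess.

Section Recoloring.
Variables (V : finType) (S : state V).
Hypothesis S_nored : forall x, S x != red.

Lemma recolor_red_blue (A : {set V}) x : A \subset ~: blues S -> S x = blue ->
  recolor_red S A x = blue.
Proof.
move=> A_nb Sx; rewrite ffunE; case: ifP => // xA.
by have := fintype.subsetP A_nb x xA; rewrite !inE Sx.
Qed.

Lemma recolor_red_uncol (A : {set V}) x : S x != blue ->
  recolor_red S A x = if x \in A then red else uncol.
Proof. by move: (S_nored x); rewrite ffunE; case: (S x) => [[]|]. Qed.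

Lemma setU1_sub_compl_blues (A : {set V}) v :
  A \subset ~: blues S -> v \notin blues S -> v |: A \subset ~: blues S.
Proof. by move=> A_nb v_nb; rewrite finset.subUset finset.sub1set inE v_nb. Qed.

Lemma recolor_monotone_inv (A : {set V}) v :
  A \subset ~: blues S -> v \notin blues S -> forall x,
  monotone_inv (recolor_red S A x) (recolor_red S (v |: A) x)
               (recolor_red S A x) (recolor_red S A x).
Proof.
move=> A_nb v_nb x; rewrite /monotone_inv !eqxx !andbT.
have [Sx|Sx] := eqVneq (S x) blue.
  by rewrite !recolor_red_blue ?setU1_sub_compl_blues.
by rewrite !recolor_red_uncol // in_setU1; case: (x == v); case: (x \in A).
Qed.

Lemma recolor_submodular_inv (A A' : {set V}) v :
  A \subset A' -> A' \subset ~: blues S -> v \notin blues S -> forall x,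
  submodular_inv (recolor_red S A x) (recolor_red S (v |: A) x)
                 (recolor_red S A' x) (recolor_red S (v |: A') x).
Proof.
move=> AA' A'_nb v_nb x; have A_nb := fintype.subset_trans AA' A'_nb.
have [Sx|Sx] := eqVneq (S x) blue.
  by rewrite !recolor_red_blue ?setU1_sub_compl_blues.
rewrite !recolor_red_uncol // !in_setU1; have := fintype.subsetP AA' x.
by case: (x == v); case: (x \in A); case: (x \in A') => // /(_ isT).
Qed.

End Recoloring.

Theorem theorem2p2 (R : realType) (V : finType) (E : rel V) (S : state V) :
  (forall v, S v != red) ->
  (forall (A : {set V}) (v : V),
      A \subset ~: blues S -> v \notin blues S ->
      F R E S A <= F R E S (v |: A)) /\
  (forall (A A' : {set V}) (v : V),
      A \subset A' -> A' \subset ~: blues S -> v \notin blues S ->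
      F R E S (v |: A') - F R E S A' <= F R E S (v |: A) - F R E S A).
Proof.
move=> S_nored; split.
  move=> A v A_nb v_nb.
  have := expected_final_reds_coupling R E monotone_inv_step monotone_inv_reds
            (recolor_monotone_inv S_nored A_nb v_nb).
  rewrite /F; lra.
move=> A A' v AA' A'_nb v_nb.
have := expected_final_reds_coupling R E submodular_inv_step submodular_inv_reds
          (recolor_submodular_inv S_nored AA' A'_nb v_nb).
rewrite /F; lra.
Qed.
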